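(* $\mathfrak{r}_{\mathrm{game}}^{\mathrm{I}} \ge \max\{\mathfrak{r},\mathfrak{d}\}$.
   Context: For $x\subseteq\omega$ and $y\in[\omega]^\omega$, $y$ reaps $x$ if $y\subseteq^* x$ or $y\subseteq^*\omega\setminus x$ (where $A\subseteq^* B$ means $A\setminus B$ is finite). $\mathfrak{r}$ is the least size of $\mathcal{A}\subseteq[\omega]^\omega$ such that every $x\subseteq\omega$ is reaped by some member of $\mathcal{A}$. $\mathfrak{d}$ is the dominating number (least size of a family $\mathcal{D}\subseteq\omega^\omega$ such that every $x\in\omega^\omega$ is eventually dominated by some member of $\mathcal{D}$). For $\mathcal{A}\subseteq[\omega]^\omega$, the reaping game with respect to $\mathcal{A}$: at round $k$, Player I plays $n_k\in\omega$ with $n_0<n_1<\cdots$, and then Player II plays $i_k\in\{0,1\}$. Player II wins iff there is $A\in\mathcal{A}$ such that $\{n_k:k\in\omega\}\cap A=\{n_k: i_k=1\}$ and $A$ reaps $\{n_k:k\in\omega\}$. $\mathfrak{r}_{\mathrm{game}}^{\mathrm{I}}$ is the least $|\mathcal{A}|$ such that Player I has no winning strategy in the reaping game with respect to $\mathcal{A}$. *)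

(* Subsets of omega are represented by characteristic
   functions nat -> bool; families of subsets by predicates on them. *)
From Stdlib Require Import List Arith Bool.
Import ListNotations.

Definition subset_w := nat -> bool.

Definition finite_set (x : subset_w) : Prop :=
  exists N, forall n, x n = true -> n < N.

Definition infinite_set (x : subset_w) : Prop := ~ finite_set x.

Definition almost_sub (a b : subset_w) : Prop :=
  finite_set (fun n => a n && negb (b n)).

Definition compl (x : subset_w) : subset_w := fun n => negb (x n).

Definition reaps (y x : subset_w) : Prop :=
  infinite_set y /\ (almost_sub y x \/ almost_sub y (compl x)).

Definition family := subset_w -> Prop.
Definition infinite_family (A : family) : Prop :=
  forall y, A y -> infinite_set y.

Definition reaping_family (F : family) : Prop :=
  infinite_family F /\ forall x : subset_w, exists y, F y /\ reaps y x.

Definition eventually_dominates (g f : nat -> nat) : Prop :=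
  exists N, forall n, N <= n -> f n <= g n.
Definition dominating_family (D : (nat -> nat) -> Prop) : Prop :=
  forall f : nat -> nat, exists g, D g /\ eventually_dominates g f.

Definition card_le {S T : Type} (X : S -> Prop) (Y : T -> Prop) : Prop :=
  exists h : S -> T, (forall s, X s -> Y (h s)) /\
    (forall s1 s2, X s1 -> X s2 -> h s1 = h s2 -> s1 = s2).

Definition ge_reaping_number (A : family) : Prop :=
  exists F : family, reaping_family F /\ card_le F A.

Definition ge_dominating_number (A : family) : Prop :=
  exists D : (nat -> nat) -> Prop, dominating_family D /\ card_le D A.

(* ---- The reaping game ----
   A strategy for Player I maps the history of II's moves (i_0,...,i_{k-1})
   to I's move n_k.  Legality: the moves strictly increase. *)
Definition strategyI := list bool -> nat.

Definition legal_strategyI (sigma : strategyI) : Prop :=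
  forall (s : list bool) (b : bool), sigma s < sigma (s ++ [b]).

Fixpoint hist (i : nat -> bool) (k : nat) : list bool :=
  match k with
  | 0 => []
  | S k' => hist i k' ++ [i k']
  end.

Definition moveI (sigma : strategyI) (i : nat -> bool) (k : nat) : nat :=
  sigma (hist i k).

Definition played_set (sigma : strategyI) (i : nat -> bool) (m : nat) : Prop :=
  exists k, moveI sigma i k = m.

Definition II_wins (A : family) (sigma : strategyI) (i : nat -> bool) : Prop :=
  exists a, A a /\
    (forall m, (played_set sigma i m /\ a m = true) <->
               (exists k, moveI sigma i k = m /\ i k = true)) /\
    (exists x : subset_w, (forall m, x m = true <-> played_set sigma i m)
                          /\ reaps a x).

Definition winning_strategyI (A : family) (sigma : strategyI) : Prop :=
  legal_strategyI sigma /\ forall i : nat -> bool, ~ II_wins A sigma i.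

Definition I_has_no_winning_strategy (A : family) : Prop :=
  ~ exists sigma, winning_strategyI A sigma.

From Stdlib Require Import List Arith Bool Lia Wf_nat Classical ClassicalEpsilon
  FunctionalExtensionality.
Import ListNotations.

(* Let A ⊆ [ω]^ω be a family for which Player I has no winning
   strategy; then every legal strategy of I loses against some play of II.
   - A is itself a reaping family.  A finite x is reaped by any infinite set.
     For infinite x, let I enumerate x increasingly: a winning play of II
     yields some a ∈ A reaping the played set, which is exactly x.
   - A has size at least d.  Sending a ∈ A to g_a(n) := "second element of a
     above n" gives a family of size at most |A|; it is dominating.  Given f,
     I jumps by more than f(0)+...+f(n_k) right after every answer i_k = 1,
     and by 1 after i_k = 0.  If a ∈ A wins, a cannot be almost disjoint from
     the played set (II would eventually answer 0, making the played set
     cofinite), so a is almost contained in it; then above any large n the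
     first element of a is a move answered by 1, and the next element of a
     lies beyond the following jump, hence beyond f(n). *)

Lemma infinite_unbounded (x : subset_w) (n : nat) :
  infinite_set x -> exists m, n <= m /\ x m = true.
Proof.
  intro Hinf. apply NNPP. intro Hnone. apply Hinf. exists n.
  intros m Hm. destruct (le_lt_dec n m) as [Hle|Hlt]; [|exact Hlt].
  exfalso. apply Hnone. now exists m.
Qed.

Definition is_next (x : subset_w) (n m : nat) : Prop :=
  n <= m /\ x m = true /\ forall k, n <= k -> x k = true -> m <= k.

Definition next (x : subset_w) (n : nat) : nat :=
  epsilon (inhabits 0) (is_next x n).

Lemma next_spec (x : subset_w) (n : nat) :
  infinite_set x -> is_next x n (next x n).
Proof.
  intro Hinf. unfold next. apply epsilon_spec.
  destruct (dec_inh_nat_subset_has_unique_least_element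
              (fun m => n <= m /\ x m = true)) as [m [[[Hnm Hxm] Hleast] _]].
  - intro m. apply classic.
  - now apply infinite_unbounded.
  - exists m. repeat split; auto.
Qed.

Section Increasing.
Variable s : nat -> nat.
Hypothesis s_incr : forall k, s k < s (S k).

Lemma incr_lt (k j : nat) : k < j -> s k < s j.
Proof. induction 1; [apply s_incr | specialize (s_incr m); lia]. Qed.

Lemma incr_lt_inv (k j : nat) : s k < s j -> k < j.
Proof.
  intro H. destruct (le_lt_dec j k) as [Hle|]; [|assumption].
  destruct (Nat.eq_dec j k); [subst; lia|].
  pose proof (incr_lt j k ltac:(lia)). lia.
Qed.

Lemma incr_ge_index (k : nat) : k <= s k.
Proof. induction k; [lia | specialize (s_incr k); lia]. Qed.
End Increasing.

Fixpoint enum (x : subset_w) (k : nat) : nat :=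
  match k with
  | 0 => next x 0
  | S k' => next x (S (enum x k'))
  end.

Section Enumeration.
Variable x : subset_w.
Hypothesis x_inf : infinite_set x.

Lemma enum_incr (k : nat) : enum x k < enum x (S k).
Proof. simpl. destruct (next_spec x (S (enum x k)) x_inf) as [H _]. lia. Qed.

Lemma enum_in (k : nat) : x (enum x k) = true.
Proof. destruct k; apply next_spec; assumption. Qed.

Lemma enum_onto (m : nat) : x m = true -> exists j, enum x j = m.
Proof.
  intro Hm.
  assert (Hbelow : forall k, m <= enum x k -> exists j, enum x j = m).
  { induction k as [|k IH]; intro Hle.
    - exists 0. destruct (next_spec x 0 x_inf) as [_ [_ Hmin]].
      specialize (Hmin m (Nat.le_0_l m) Hm). simpl in *. lia.
    - destruct (le_lt_dec m (enum x k)) as [Hk|Hk]; [now apply IH|].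
      exists (S k). destruct (next_spec x (S (enum x k)) x_inf) as [_ [_ Hmin]].
      specialize (Hmin m Hk Hm). simpl in *. lia. }
  apply (Hbelow m), incr_ge_index, enum_incr.
Qed.
End Enumeration.

Lemma almost_sub_eventually (a b : subset_w) :
  almost_sub a b -> exists N, forall m, N <= m -> a m = true -> b m = true.
Proof.
  intros [N HN]. exists N. intros m Hm Ham.
  destruct (b m) eqn:Hbm; [reflexivity|].
  specialize (HN m). rewrite Ham, Hbm in HN. specialize (HN eq_refl). lia.
Qed.

Lemma infinite_reaps_finite (a x : subset_w) :
  infinite_set a -> finite_set x -> reaps a x.
Proof.
  intros Ha [N HN]. split; [assumption|]. right. exists N.
  intros m Hm. apply HN. unfold compl in Hm.
  destruct (a m), (x m); simpl in *; congruence.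
Qed.

Lemma not_almost_disjoint_cofinite (a x : subset_w) (M : nat) :
  infinite_set a -> (forall m, M <= m -> x m = true) -> ~ almost_sub a (compl x).
Proof.
  intros Ha Hx Hsub. destruct (almost_sub_eventually _ _ Hsub) as [N HN].
  destruct (infinite_unbounded a (N + M) Ha) as [m [Hm Ham]].
  specialize (HN m ltac:(lia) Ham). unfold compl in HN.
  rewrite Hx in HN by lia. discriminate.
Qed.

Lemma card_le_image {S T : Type} (inh : inhabited S) (X : S -> Prop) (g : S -> T) :
  card_le (fun t => exists s, X s /\ t = g s) X.
Proof.
  pose (pre t := epsilon inh (fun s => X s /\ t = g s)).
  assert (Hpre : forall t, (exists s, X s /\ t = g s) -> X (pre t) /\ t = g (pre t))
    by (intros t Ht; now apply epsilon_spec).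
  exists pre. split.
  - intros t Ht. apply (Hpre t Ht).
  - intros t1 t2 H1 H2 Heq.
    rewrite (proj2 (Hpre t1 H1)), (proj2 (Hpre t2 H2)), Heq. reflexivity.
Qed.

Lemma hist_length (i : nat -> bool) (k : nat) : length (hist i k) = k.
Proof. induction k; simpl; [reflexivity | rewrite length_app; simpl; lia]. Qed.

Lemma legal_strategy_beaten (A : family) (sigma : strategyI) :
  I_has_no_winning_strategy A -> legal_strategyI sigma ->
  exists i, II_wins A sigma i.
Proof.
  intros Hno Hlegal. apply NNPP. intro Hnone. apply Hno. exists sigma.
  split; [assumption|]. intros i Hi. apply Hnone. now exists i.
Qed.

Definition by_round (e : nat -> nat) : strategyI := fun s => e (length s).

Lemma by_round_move (e : nat -> nat) (i : nat -> bool) (k : nat) :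
  moveI (by_round e) i k = e k.
Proof. unfold moveI, by_round. now rewrite hist_length. Qed.

Lemma by_round_legal (e : nat -> nat) :
  (forall k, e k < e (S k)) -> legal_strategyI (by_round e).
Proof.
  intros He s b. unfold by_round. rewrite length_app. simpl.
  rewrite Nat.add_1_r. apply He.
Qed.

Lemma no_winning_strategy_reaping (A : family) :
  infinite_family A -> I_has_no_winning_strategy A -> reaping_family A.
Proof.
  intros HA Hno. split; [assumption|]. intro x.
  destruct (classic (finite_set x)) as [Hfin|Hinf].
  - destruct (legal_strategy_beaten A (by_round (fun k => k)) Hno) as [i [a [Ha _]]].
    { apply by_round_legal. lia. }
    exists a. split; [assumption|]. apply infinite_reaps_finite; [now apply HA | exact Hfin].
  - destruct (legal_strategy_beaten A (by_round (enum x)) Hno)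
      as [i [a [Ha [_ [y [Hy Hreap]]]]]].
    { apply by_round_legal, enum_incr, Hinf. }
    assert (Hyx : y = x).
    { apply functional_extensionality. intro m.
      apply eq_true_iff_eq. rewrite Hy. unfold played_set.
      setoid_rewrite by_round_move. split.
      - intros [k <-]. now apply enum_in.
      - now apply enum_onto. }
    exists a. split; [assumption|]. now rewrite <- Hyx.
Qed.

Fixpoint cumul (f : nat -> nat) (n : nat) : nat :=
  match n with 0 => f 0 | S n' => cumul f n' + f (S n') end.

Lemma cumul_ge (f : nat -> nat) (n m : nat) : n <= m -> f n <= cumul f m.
Proof.
  induction 1; [destruct n; simpl; lia | simpl; lia].
Qed.

Definition jump (f : nat -> nat) (n : nat) (b : bool) : nat :=
  n + 1 + (if b then cumul f n else 0).

Definition dom_strategy (f : nat -> nat) : strategyI := fun s => fold_left (jump f) s 0.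

Lemma dom_strategy_move (f : nat -> nat) (i : nat -> bool) (k : nat) :
  moveI (dom_strategy f) i (S k) = jump f (moveI (dom_strategy f) i k) (i k).
Proof. unfold moveI, dom_strategy. simpl. now rewrite fold_left_app. Qed.

Lemma dom_strategy_legal (f : nat -> nat) : legal_strategyI (dom_strategy f).
Proof. intros s b. unfold dom_strategy. rewrite fold_left_app. simpl. unfold jump. lia. Qed.

Definition second_above (a : subset_w) (n : nat) : nat := next a (S (next a (S n))).

Section DominatingPlay.
Variables (f : nat -> nat) (i : nat -> bool) (a : subset_w) (x : subset_w).
Let s : nat -> nat := moveI (dom_strategy f) i.
Hypothesis a_inf : infinite_set a.
Hypothesis trace : forall m, (played_set (dom_strategy f) i m /\ a m = true) <->
                             (exists k, s k = m /\ i k = true).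
Hypothesis x_played : forall m, x m = true <-> played_set (dom_strategy f) i m.

Lemma s_incr (k : nat) : s k < s (S k).
Proof. apply dom_strategy_legal. Qed.

Lemma jump_exceeds (k n : nat) : i k = true -> n <= s k -> f n < s (S k).
Proof.
  intros Hik Hn. unfold s. rewrite dom_strategy_move, Hik. fold s.
  unfold jump. pose proof (cumul_ge f n (s k) Hn). lia.
Qed.

(* If [a] is almost disjoint from the played set, II eventually answers 0,
   so I eventually plays every number: the played set is cofinite. *)
Lemma not_almost_disjoint_played : ~ almost_sub a (compl x).
Proof.
  intro Hsub. destruct (almost_sub_eventually _ _ Hsub) as [N HN].
  assert (Hzero : forall k, N <= s k -> i k = false).
  { intros k Hk. destruct (i k) eqn:Hik; [|reflexivity].
    destruct (proj2 (trace (s k)) (ex_intro _ k (conj eq_refl Hik))) as [Hp Ha].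
    specialize (HN (s k) Hk Ha). unfold compl in HN.
    rewrite (proj2 (x_played (s k)) Hp) in HN. discriminate. }
  assert (Hconsec : forall d, s (N + d) = s N + d).
  { induction d as [|d IH]; [now rewrite Nat.add_0_r|].
    rewrite Nat.add_succ_r. unfold s at 1. rewrite dom_strategy_move. fold s.
    rewrite Hzero by (pose proof (incr_ge_index s s_incr N); lia).
    unfold jump. lia. }
  apply (not_almost_disjoint_cofinite a x (s N) a_inf); [|exact Hsub].
  intros m Hm. apply x_played. exists (N + (m - s N)).
  fold s. rewrite Hconsec. lia.
Qed.

Lemma almost_sub_played_dominates :
  almost_sub a x -> eventually_dominates (second_above a) f.
Proof.
  intro Hsub. destruct (almost_sub_eventually _ _ Hsub) as [N HN].
  exists N. intros n Hn. unfold second_above.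
  destruct (next_spec a (S n) a_inf) as [H1 [Ha1 _]].
  set (m1 := next a (S n)) in *.
  destruct (next_spec a (S m1) a_inf) as [H2 [Ha2 _]].
  set (m2 := next a (S m1)) in *.
  destruct (proj1 (trace m1)) as [k [Hk Hik]].
  { split; [apply x_played, HN|]; auto; lia. }
  destruct (proj1 (x_played m2)) as [j Hj]; [apply HN; auto; lia|].
  fold s in Hj.
  assert (Hkj : S k <= j) by (apply (incr_lt_inv s s_incr); lia).
  pose proof (jump_exceeds k n Hik ltac:(lia)).
  destruct (Nat.eq_dec (S k) j) as [<-|]; [lia|].
  pose proof (incr_lt s s_incr (S k) j ltac:(lia)). lia.
Qed.
End DominatingPlay.

Lemma win_dominates (A : family) (f : nat -> nat) (i : nat -> bool) :
  infinite_family A -> II_wins A (dom_strategy f) i ->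
  exists a, A a /\ eventually_dominates (second_above a) f.
Proof.
  intros HA [a [Ha [Htrace [x [Hx [_ Hreap]]]]]].
  exists a. split; [assumption|].
  destruct Hreap as [Hsub|Hdisj].
  - exact (almost_sub_played_dominates f i a x (HA a Ha) Htrace Hx Hsub).
  - exfalso. exact (not_almost_disjoint_played f i a x (HA a Ha) Htrace Hx Hdisj).
Qed.

Lemma no_winning_strategy_dominating (A : family) :
  infinite_family A -> I_has_no_winning_strategy A -> ge_dominating_number A.
Proof.
  intros HA Hno.
  exists (fun g => exists a, A a /\ g = second_above a). split.
  - intro f.
    destruct (legal_strategy_beaten A (dom_strategy f) Hno (dom_strategy_legal f)) as [i Hi].
    destruct (win_dominates A f i HA Hi) as [a [Ha Hdom]].
    exists (second_above a). split; [now exists a | exact Hdom].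
  - apply card_le_image. exact (inhabits (fun _ => false)).
Qed.

Theorem mainTheorem5 :
  forall A : family,
    infinite_family A ->
    I_has_no_winning_strategy A ->
    ge_reaping_number A /\ ge_dominating_number A.
Proof.
  intros A HA Hno. split.
  - exists A. split; [now apply no_winning_strategy_reaping|].
    exists (fun a => a). split; [trivial | intros; assumption].
  - now apply no_winning_strategy_dominating.
Qed.
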